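(* $\mathfrak{mc}(\beta\omega\setminus\omega,\le_{\mathrm{RK}})=\mathfrak{b}(\beta\omega\setminus\omega,\le_{\mathrm{RK}})=\mathfrak{c}^+$. Moreover, if $\mathfrak{icp}(\beta\omega\setminus\omega,\le_{\mathrm{RK}})$ is defined (i.e. every nonprincipal ultrafilter has an RK-incomparable nonprincipal ultrafilter), then it equals $\mathfrak{c}^+$.
   Context: $\beta\omega\setminus\omega$ is the set of nonprincipal ultrafilters on $\omega$. For ultrafilters $p,q$ on $\omega$, $p\le_{\mathrm{RK}} q$ iff there is $f:\omega\to\omega$ with $p=\{A\subseteq\omega : f^{-1}(A)\in q\}$; this is a preorder and the following definitions apply to it verbatim. For a preorder $(P,\le)$: $F\subseteq P$ is unbounded if for every $p\in P$ there is $q\in F$ with $q\not\le p$, and $\mathfrak{b}(P,\le)$ is the minimal size of an unbounded family; a chain is a set of pairwise comparable elements and $\mathfrak{mc}(P)$ is the minimal size of a maximal (under inclusion) chain; $F$ is an incomparable family if for every $p\in P$ there is $q\in F$ with $p\not\le q$ and $q\not\le p$, and $\mathfrak{icp}(P)$ is the minimal size of such a family. $\mathfrak{c}=2^{\aleph_0}$. *)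

Definition subset_nat := nat -> Prop.

Definition is_ultrafilter (U : subset_nat -> Prop) : Prop :=
  (forall A B : subset_nat, U A -> (forall n, A n -> B n) -> U B) /\
  (forall A B : subset_nat, U A -> U B -> U (fun n => A n /\ B n)) /\
  ~ U (fun _ => False) /\
  (forall A : subset_nat, U A \/ U (fun n => ~ A n)).

Definition is_nonprincipal (U : subset_nat -> Prop) : Prop :=
  forall A : subset_nat, (exists N, forall n, A n -> n < N) -> ~ U A.

(** the remainder beta omega \ omega *)
Definition NPU : Type :=
  { U : subset_nat -> Prop | is_ultrafilter U /\ is_nonprincipal U }.

Definition uf (p : NPU) : subset_nat -> Prop := proj1_sig p.

Definition RK_le (p q : NPU) : Prop :=
  exists f : nat -> nat, forall A : subset_nat, uf p A <-> uf q (fun n => A (f n)).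

Definition family := NPU -> Prop.

Definition unbounded (F : family) : Prop :=
  forall p, exists q, F q /\ ~ RK_le q p.

Definition chain (C : family) : Prop :=
  forall p q, C p -> C q -> RK_le p q \/ RK_le q p.

Definition maximal_chain (C : family) : Prop :=
  chain C /\ forall D : family, chain D -> (forall p, C p -> D p) -> forall p, D p -> C p.

Definition incomparable_family (F : family) : Prop :=
  forall p, exists q, F q /\ ~ RK_le p q /\ ~ RK_le q p.

Definition icp_defined : Prop := incomparable_family (fun _ => True).

(** |F| <= c : F injects into 2^omega *)
Definition card_le_c (F : family) : Prop :=
  exists g : NPU -> (nat -> bool),
    forall p q, F p -> F q -> g p = g q -> p = q.

(** |F| <= c^+ : F carries a well-order all of whose proper initial segments
    have size <= c *)
Definition card_le_c_plus (F : family) : Prop :=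
  exists R : NPU -> NPU -> Prop,
    (forall p, F p -> ~ R p p) /\
    (forall p q r, F p -> F q -> F r -> R p q -> R q r -> R p r) /\
    (forall p q, F p -> F q -> R p q \/ p = q \/ R q p) /\
    (forall G : family, (forall p, G p -> F p) -> (exists p, G p) ->
        exists m, G m /\ forall p, G p -> ~ R p m) /\
    (forall p, F p -> card_le_c (fun q => F q /\ R q p)).

(** "the minimal size of a family with property P is c^+" *)
Definition min_size_is_c_plus (P : family -> Prop) : Prop :=
  (exists F, P F /\ card_le_c_plus F) /\
  (forall F, P F -> ~ card_le_c F).

From Stdlib Require Import Lia List Cantor.
From mathcomp Require Import ssreflect ssrfun ssrbool eqtype.
From mathcomp Require Import boolp classical_sets filter.
From mathcomp Require wochoice.

(** An
    ultrafilter has at most [c] RK-predecessors, each being the image under one of the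
    [c] maps [nat -> nat].  Conversely any [c] ultrafilters have a common RK-upper
    bound: along an independent family of [c] functions [indep s], one finds [q] such
    that [indep s] maps [q] onto the [s]-th ultrafilter.  Diagonalizing against the
    predecessors of [q] yields an ultrafilter not below [q], so every ultrafilter has a
    strict RK-successor.

    Hence an unbounded family, in particular a maximal chain or an incomparable family,
    has more than [c] elements.  A maximal chain [C] exists by Zorn's lemma and is
    unbounded.  It has at most [c^+] elements: well-order the remainder and rank each
    element of [C] by the least element of [C] above it; all elements of smaller rank
    lie RK-below a single ultrafilter.  When [icp] is defined, adding to [C] an
    incomparable partner of each of its elements gives an incomparable family of the
    same size. *)

Set Implicit Arguments.
Unset Strict Implicit.

Lemma npu_ext (p q : NPU) : (forall A, uf p A <-> uf q A) -> p = q.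
Proof.
case: p q => [U HU] [V HV] /= eqUV.
have eUV : U = V by apply/funext => A; apply/propext.
by case: _ / eUV in HV *; congr exist.
Qed.

#[global] Instance uf_proper_filter (p : NPU) : ProperFilter (uf p).
Proof.
have [[up [capI [not0 compl]]] _] := proj2_sig p.
split=> //; split=> [|A B|A B AB /up]; [|exact: capI|exact].
by case: (compl set0) => // /up; apply.
Qed.

Lemma uf_compl (p : NPU) (A : subset_nat) : uf p A \/ uf p (fun n => ~ A n).
Proof. by have [[_ [_ [_ compl]]] _] := proj2_sig p; apply: compl. Qed.

Lemma uf_not_compl (p : NPU) (A : subset_nat) : uf p A -> ~ uf p (fun n => ~ A n).
Proof. by move=> pA /(filterI pA) /filter_ex [n []]. Qed.

Lemma RK_refl (p : NPU) : RK_le p p.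
Proof. by exists id. Qed.

Lemma RK_trans (p q r : NPU) : RK_le p q -> RK_le q r -> RK_le p r.
Proof. by move=> [f pq] [g qr]; exists (f \o g) => A; rewrite pq qr. Qed.

Lemma RK_le_of_sub (p q : NPU) (f : nat -> nat) :
  (forall A, uf p A -> uf q (fun n => A (f n))) -> RK_le p q.
Proof.
move=> pq; exists f => A; split; first exact: pq.
by move=> qA; case: (uf_compl p A) => // /pq /(uf_not_compl qA).
Qed.

Lemma npu_of_ultra (U : set_system nat) :
  UltraFilter U -> (forall N, U (fun n => N <= n)) -> {q : NPU | uf q = U}.
Proof.
move=> ultraU tails.
suff npuU : is_ultrafilter U /\ is_nonprincipal U by exists (exist _ U npuU).
split.
- split; first by move=> A B UA AB; apply: filterS UA.
  split; first exact: filterI.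
  by split; [exact: filter_not_empty | move=> A; exact: in_ultra_setVsetC].
- move=> A [N boundA] UA.
  have [n [/boundA ltnN leNn]] := filter_ex (filterI UA (tails N)).
  lia.
Qed.

Lemma npu_of_tail_fip (C : Type) (ok : C -> Prop) (sat : C -> subset_nat) :
  (forall (L : list C) N, (forall c, In c L -> ok c) ->
     exists m, N <= m /\ forall c, In c L -> sat c m) ->
  exists q : NPU, forall c, ok c -> uf q (sat c).
Proof.
move=> fip.
pose G (B : subset_nat) := exists L N, (forall c, In c L -> ok c) /\
  forall m, N <= m -> (forall c, In c L -> sat c m) -> B m.
have properG : ProperFilter G.
  split.
    by case=> L [N [okL sub0]]; have [m [leNm satm]] := fip L N okL; exact: sub0 m leNm satm.
  split.
  - by exists nil, 0.
  - move=> A B [LA [NA [okA subA]]] [LB [NB [okB subB]]].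
    exists (LA ++ LB), (NA + NB); split.
      by move=> c; rewrite in_app_iff => -[/okA|/okB].
    move=> m leNm satL; split; [apply: subA | apply: subB]; try lia;
      by move=> c Lc; apply: satL; rewrite in_app_iff; auto.
  - by move=> A B AB [L [N [okL subA]]]; exists L, N; split=> // m /subA H /H /AB.
have [U [ultraU GU]] := ultraFilterLemma properG.
have [q qU] : {q : NPU | uf q = U}.
  by apply: npu_of_ultra => // N; apply: GU; exists nil, N.
exists q; rewrite qU => c okc; apply: GU; exists (c :: nil), 0.
by split=> [c' [<-|[]] //|m _]; apply; left.
Qed.

Fixpoint encode (G : nat -> nat) (len : nat) : nat :=
  if len is S len' then Cantor.to_nat (G 0, encode (fun t => G (S t)) len') else 0.

Fixpoint decode (c t : nat) : nat :=
  if t is S t' then decode (Cantor.of_nat c).2 t' else (Cantor.of_nat c).1.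

Lemma decode_encode (len : nat) (G : nat -> nat) (t : nat) :
  t < len -> decode (encode G len) t = G t.
Proof.
elim: len G t => [|len IH] G [|t] ltt; cbn [encode decode]; try lia;
  rewrite Cantor.cancel_of_to //=.
by rewrite IH; lia.
Qed.

Definition prefix_code (s : nat -> bool) (n : nat) : nat :=
  encode (fun i => if s i then 1 else 0) n.

Lemma prefix_code_separates (s s' : nat -> bool) (i n : nat) :
  i < n -> s i <> s' i -> prefix_code s n <> prefix_code s' n.
Proof.
move=> ltin neq eqcode; apply: neq.
have := f_equal (decode^~ i) eqcode; rewrite /prefix_code !decode_encode //.
by case: (s i); case: (s' i).
Qed.

(** [indep s] reads its argument [m] as a pair [(n, c)], where [c] codes a finite
    table, and looks up the entry of that table at the code of [s]'s prefix of length
    [n].  Hence finitely many distinct [s] can be sent to prescribed values. *)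
Definition indep (s : nat -> bool) (m : nat) : nat :=
  decode (Cantor.of_nat m).2 (prefix_code s (Cantor.of_nat m).1).

Lemma eventually_all (T : Type) (P : T -> nat -> Prop) (L : list T) :
  (forall x, In x L -> exists n0, forall n, n0 <= n -> P x n) ->
  exists n0, forall n, n0 <= n -> forall x, In x L -> P x n.
Proof.
elim: L => [|a L IH] evP; first by exists 0.
have [na Pa] := evP a (or_introl erefl).
have [nL PL] := IH (fun x Lx => evP x (or_intror Lx)).
exists (na + nL) => n len x [<-|Lx]; [apply: Pa | apply: PL]; by [lia|].
Qed.

Lemma prefix_code_eventually_injective (L : list (nat -> bool)) :
  exists n0, forall n, n0 <= n -> forall s, In s L -> forall s', In s' L ->
    prefix_code s n = prefix_code s' n -> s = s'.
Proof.
apply: eventually_all => s _; apply: eventually_all => s' _.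
have [->|ss'] := pselect (s = s'); first by exists 0.
have [i neq] : exists i, s i <> s' i by apply/existsNP => eqs; apply/ss'/funext.
by exists (S i) => n ltin /(prefix_code_separates ltin neq).
Qed.

Lemma indep_interpolates (L : list (nat -> bool)) (v : (nat -> bool) -> nat) (N : nat) :
  exists m, N <= m /\ forall s, In s L -> indep s m = v s.
Proof.
have [n0 code_inj] := prefix_code_eventually_injective L.
pose n := N + n0.
pose table t := if find (fun s => Nat.eqb (prefix_code s n) t) L is Some s then v s else 0.
pose len := S (list_max (map (prefix_code^~ n) L)).
exists (Cantor.to_nat (n, encode table len)); split.
  by have := Cantor.to_nat_non_decreasing n (encode table len); lia.
move=> s Ls; rewrite /indep Cantor.cancel_of_to; cbn [fst snd]; rewrite decode_encode.
  rewrite /table; case E: find => [s'|].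
    have [Ls' /PeanoNat.Nat.eqb_eq codes] := find_some _ _ E.
    by rewrite (code_inj n _ s' Ls' s Ls codes) //; lia.
  by have := find_none _ _ E s Ls; rewrite PeanoNat.Nat.eqb_refl.
apply/PeanoNat.Nat.lt_succ_r.
have /Forall_forall := proj1 (list_max_le (map (prefix_code^~ n) L) _) (le_n _).
by apply; apply: in_map.
Qed.

Lemma filter_meet_fiber (T I : Type) (F : set_system T) {FF : Filter F}
    (i : I) (L : list (I * set T)) :
  (forall A, In (i, A) L -> F A) -> F (fun t => forall A, In (i, A) L -> A t).
Proof.
elim: L => [|[j B] L IH] FL; first exact: filterS filterT.
have FLtail := IH (fun A LA => FL A (or_intror LA)).
have [eij|nij] := pselect (j = i).
  apply: filterS (filterI (FL B (or_introl (f_equal (pair^~ B) eij))) FLtail).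
  by move=> t [Bt Lt] A [[_ <-]|LA] //; apply: Lt.
apply: filterS FLtail => t Lt A [[/nij]|LA] //; exact: Lt.
Qed.

Lemma exists_npu_indep_above (D : (nat -> bool) -> Prop)
    (U : (nat -> bool) -> set_system nat) :
  (forall s, D s -> ProperFilter (U s)) ->
  exists q : NPU, forall s A, D s -> U s A -> uf q (fun m => A (indep s m)).
Proof.
move=> properU.
suff [q qU] : exists q : NPU, forall c : (nat -> bool) * subset_nat,
    D c.1 /\ U c.1 c.2 -> uf q (fun m => c.2 (indep c.1 m)).
  by exists q => s A Ds UA; apply: (qU (s, A)).
apply: npu_of_tail_fip => L N okL.
have /choice [v v_fiber] : forall s, exists n, forall A, In (s, A) L -> A n.
  move=> s; have [[A0 LA0]|noA] := pselect (exists A, In (s, A) L); last first.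
    by exists 0 => A LA; case: noA; exists A.
  have [Ds _] := okL _ LA0; have properUs := properU s Ds.
  by apply: (@filter_ex _ (U s)); apply: filter_meet_fiber => A /okL [].
have [m [leNm indep_v]] := indep_interpolates (map fst L) v N.
exists m; split=> // -[s A] LsA /=; rewrite indep_v; first exact: v_fiber.
by apply: (in_map fst _ (s, A)).
Qed.

Lemma exists_npu_above_family (X : Type) (P : X -> Prop) (g : X -> nat -> bool)
    (Phi : X -> set_system nat) :
  (forall x y, P x -> P y -> g x = g y -> x = y) -> (forall x, P x -> ProperFilter (Phi x)) ->
  exists q : NPU, forall x A, P x -> Phi x A -> uf q (fun m => A (indep (g x) m)).
Proof.
move=> g_inj properPhi.
pose U s A := forall x, P x -> g x = s -> Phi x A.
have Ug x : P x -> U (g x) = Phi x.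
  move=> Px; apply/funext => A; apply/propext; split=> [|PhiA y Py gy]; first exact.
  by rewrite (g_inj y x Py Px gy).
have [q qU] : exists q : NPU, forall s A, (exists x, P x /\ g x = s) -> U s A ->
    uf q (fun m => A (indep s m)).
  by apply: exists_npu_indep_above => s [x [Px <-]]; rewrite Ug //; exact: properPhi.
by exists q => x A Px PhiA; apply: qU; [exists x | rewrite Ug].
Qed.

Lemma card_le_c_sub (F G : family) : card_le_c G -> (forall p, F p -> G p) -> card_le_c F.
Proof. by move=> [g g_inj] FG; exists g => p q /FG Gp /FG Gq; apply: g_inj. Qed.

Lemma card_le_c_single (a : NPU) : card_le_c (fun p => p = a).
Proof. by exists (fun _ _ => true) => p p' -> ->. Qed.

Lemma card_le_c_union (F G : family) :
  card_le_c F -> card_le_c G -> card_le_c (fun p => F p \/ G p).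
Proof.
move=> [f f_inj] [g g_inj].
exists (fun p k => if pselect (F p) then if k is S k' then f p k' else true
                   else if k is S k' then g p k' else false).
move=> p p' Hp Hp' eqcode.
have etail k := f_equal (fun c => c (S k)) eqcode; have := f_equal (fun c => c 0) eqcode.
case: pselect etail => Fp; case: pselect => Fp' //= etail _.
- by apply: f_inj => //; apply/funext.
- by apply: g_inj; [case: Hp | case: Hp' | apply/funext].
Qed.

Lemma card_le_c_image (F : family) (h : NPU -> NPU) :
  card_le_c F -> card_le_c (fun y => exists x, F x /\ y = h x).
Proof.
move=> [g g_inj].
have /choice [pre preP] : forall y, exists x, (exists x, F x /\ y = h x) -> F x /\ y = h x.
  by move=> y; have [[x Hx]|nx] := pselect (exists x, F x /\ y = h x); [exists x | exists y].
exists (g \o pre) => y y' /preP [Fy ey] /preP [Fy' ey'] gpre.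
by rewrite ey ey' (g_inj _ _ Fy Fy' gpre).
Qed.

Definition graph_code (h : nat -> nat) (k : nat) : bool :=
  PeanoNat.Nat.eqb (h (Cantor.of_nat k).1) (Cantor.of_nat k).2.

Lemma graph_code_inj : injective graph_code.
Proof.
move=> h h' eqcode; apply/funext => i.
have := f_equal (fun c => c (Cantor.to_nat (i, h i))) eqcode.
rewrite /graph_code Cantor.cancel_of_to PeanoNat.Nat.eqb_refl.
by move/esym/PeanoNat.Nat.eqb_eq.
Qed.

Lemma RK_cone_card_le_c (q : NPU) : card_le_c (fun p => RK_le p q).
Proof.
have /choice [f fP] : forall p : NPU, exists f : nat -> nat,
    RK_le p q -> forall A, uf p A <-> uf q (fun n => A (f n)).
  by move=> p; have [[f pq]|npq] := pselect (RK_le p q); [exists f | exists id].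
exists (graph_code \o f) => p p' /fP pq /fP p'q /graph_code_inj ff'.
by apply: npu_ext => A; rewrite pq p'q ff'.
Qed.

Lemma bounded_of_card_le_c (F : family) : card_le_c F -> exists q, forall p, F p -> RK_le p q.
Proof.
move=> [g g_inj]; have [q qF] := exists_npu_above_family g_inj (fun p _ => uf_proper_filter p).
by exists q => p Fp; apply: (RK_le_of_sub (f := indep (g p))) => A; apply: qF.
Qed.

(** Diagonalization over the cone below [q], coded injectively by [g]: [indep (g u)]
    maps [r] to the principal ultrafilter at [v u], a value chosen so that
    [indep (g u)] does not map [u] there.  Hence [r] is none of the [u]. *)
Lemma exists_not_RK_below (q : NPU) : exists r, ~ RK_le r q.
Proof.
have [g g_inj] := RK_cone_card_le_c q.
pose v u := if pselect (uf u (fun m => indep (g u) m = 0)) then 1 else 0.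
have [r rv] := exists_npu_above_family (Phi := fun u => principal_filter (v u)) g_inj
  (fun u _ => principal_filter_proper (v u)).
exists r => rq; have := rv r (fun n => n = v r) rq ((principal_filterP _ _).2 erefl).
rewrite /v; case: pselect => [r0|nr0] r1; last exact: (nr0 r1).
by apply: (uf_not_compl r0); apply: filterS r1 => m ->.
Qed.

Lemma exists_RK_strictly_above (q : NPU) : exists q', RK_le q q' /\ ~ RK_le q' q.
Proof.
have [r nrq] := exists_not_RK_below q.
have [q' qrq'] :=
  bounded_of_card_le_c (card_le_c_union (card_le_c_single q) (card_le_c_single r)).
exists q'; split; first by apply: qrq'; left.
by move=> q'q; apply/nrq/(RK_trans _ q'q)/qrq'; right.
Qed.

Lemma unbounded_not_card_le_c (F : family) : unbounded F -> ~ card_le_c F.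
Proof.
move=> unbF /bounded_of_card_le_c [q qF].
by have [p [Fp npq]] := unbF q; apply/npq/qF.
Qed.

Lemma incomparable_family_unbounded (F : family) : incomparable_family F -> unbounded F.
Proof. by move=> incF p; have [q [Fq [_ nqp]]] := incF p; exists q. Qed.

Lemma maximal_chain_exists : exists C : family, maximal_chain C.
Proof.
have [|C [chainC maxC]] := @Zorn_bigcup NPU chain.
  move=> K chainsK totK x y [X KX Xx] [Y KY Yy].
  case: (totK X Y KX KY) => [XY|YX]; first exact: chainsK Y KY x y (XY x Xx) Yy.
  exact: chainsK X KX x y Xx (YX y Yy).
exists C; split=> // D chainD CD p Dp; apply: contrapT => nCp.
by apply: (maxC D) => //; split=> //; apply/existsNP; exists p => /(_ Dp).
Qed.

Lemma maximal_chain_add (C : family) (p : NPU) :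
  maximal_chain C -> (forall x, C x -> RK_le p x \/ RK_le x p) -> C p.
Proof.
move=> [chainC maxC] cmp_p; apply: (maxC (fun x => C x \/ x = p)); [|by left|by right].
move=> x y [Cx|->] [Cy|->]; [exact: chainC | | |by left; exact: RK_refl].
- by case: (cmp_p x Cx); [right|left].
- exact: cmp_p.
Qed.

Lemma maximal_chain_unbounded (C : family) : maximal_chain C -> unbounded C.
Proof.
move=> maxC p; apply/not_existsP => unb.
have below_p x : C x -> RK_le x p.
  by move=> Cx; apply: contrapT => nxp; exact: (unb x).
have [q' [pq' nq'p]] := exists_RK_strictly_above p.
apply/nq'p/below_p/(maximal_chain_add maxC) => x Cx.
by right; apply: RK_trans (below_p x Cx) pq'.
Qed.

Definition strict_wellorder (T : Type) (W : T -> T -> Prop) : Prop :=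
  [/\ forall x, ~ W x x, forall x y z, W x y -> W y z -> W x z,
      forall x y, W x y \/ x = y \/ W y x
    & forall G : T -> Prop, (exists x, G x) -> exists m, G m /\ forall x, G x -> ~ W x m].

Lemma strict_wellorder_exists (T : Type) : exists W : T -> T -> Prop, strict_wellorder W.
Proof.
have [R woR] := wochoice.well_ordering_principle {classic T}.
have woRT : wochoice.wo_chain R predT by move=> A _; exact: woR.
have Ranti x y : R x y -> R y x -> x = y.
  by move=> xy yx; apply: (wochoice.wo_chain_antisymmetric woRT isT isT); rewrite xy yx.
have Rtotal x y : R x y \/ R y x.
  by case/orP: (wochoice.wo_chainW woRT (x:=x) (y:=y) isT isT); auto.
have Rmin (G : T -> Prop) : (exists x, G x) -> exists m, G m /\ forall x, G x -> R m x.
  move=> [x Gx]; have [|m [[Gm lbm] _]] := woR [pred y | `[< G y >]].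
    by exists x; rewrite inE.
  move: Gm; rewrite inE => Gm; exists m; split=> // y Gy.
  by apply: lbm; rewrite inE.
exists (fun x y => R x y /\ x <> y); split.
- by move=> x [_].
- move=> x y z [xy nxy] [yz nyz].
  have [|m [mxyz lbm]] := Rmin (fun w => w = x \/ w = y \/ w = z); first by exists x; left.
  split; last by move=> exz; apply: nxy; apply: Ranti xy _; rewrite exz.
  case: mxyz => [emx|[emy|emz]]; subst m.
  + by apply: lbm; right; right.
  + by case: nxy; apply: Ranti xy (lbm x _); left.
  + by case: nyz; apply: Ranti yz (lbm y _); right; left.
- move=> x y; have [->|nxy] := pselect (x = y); first by right; left.
  by case: (Rtotal x y) => ?; [left | right; right]; split=> // eyx; apply: nxy.
- move=> G /Rmin [m [Gm lbm]]; exists m; split=> // x Gx [xm nxm].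
  exact/nxm/Ranti/lbm.
Qed.

Lemma strict_wellorder_lex (K T : Type) (WK : K -> K -> Prop) (WT : T -> T -> Prop)
    (k : T -> K) :
  strict_wellorder WK -> strict_wellorder WT ->
  strict_wellorder (fun y z => WK (k y) (k z) \/ k y = k z /\ WT y z).
Proof.
move=> [irrK transK totK minK] [irrT transT totT minT]; split.
- by move=> y [/irrK|[_ /irrT]].
- move=> x y z [xy|[exy xy]] [yz|[eyz yz]].
  + by left; apply: transK xy yz.
  + by left; rewrite -eyz.
  + by left; rewrite exy.
  + by right; split; [rewrite exy | apply: transT xy yz].
- move=> y z; case: (totK (k y) (k z)) => [|[eyz|]]; [by left; left | | by right; right; left].
  by case: (totT y z) => [|[|]]; [left; right | right; left | right; right; right].
- move=> G [y Gy].
  have [|kmin [[y0 [Gy0 <-]] kminP]] := minK (fun a => exists y, G y /\ k y = a).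
    by exists (k y), y.
  have [|m [[Gm km] mP]] := minT (fun y => G y /\ k y = k y0); first by exists y0.
  exists m; split=> // x Gx [xm|[exm xm]].
    by apply: (kminP (k x)); [exists x | rewrite -km].
  by apply: (mP x) => //; split; [|rewrite exm].
Qed.

Lemma card_le_c_plus_of_wellorder (F : family) (R : NPU -> NPU -> Prop) :
  strict_wellorder R -> (forall z, F z -> card_le_c (fun y => F y /\ R y z)) ->
  card_le_c_plus F.
Proof.
by move=> [irrR transR totR minR] segR; exists R; repeat split; eauto.
Qed.

Section ChainRank.

Variables (W : NPU -> NPU -> Prop) (C : family).
Hypotheses (woW : strict_wellorder W) (chainC : chain C).

Definition is_rank (x r : NPU) : Prop :=
  [/\ C r, RK_le x r & forall u, C u -> RK_le x u -> ~ W u r].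

Lemma rank_exists (x : NPU) : C x -> exists r, is_rank x r.
Proof.
move=> Cx; have [_ _ _ minW] := woW.
have [|r [[Cr xr] rmin]] := minW (fun u => C u /\ RK_le x u).
  by exists x; split=> //; exact: RK_refl.
by exists r; split=> // u Cu xu; apply: rmin.
Qed.

Lemma rank_monotone (y ry r : NPU) : is_rank y ry -> C r -> W r ry -> RK_le r ry.
Proof.
move=> [Cry yry rymin] Cr Wr; case: (chainC Cr Cry) => // ryr.
by case: (rymin r Cr (RK_trans yry ryr)).
Qed.

End ChainRank.

(** Order [F] by the [W]-position of the rank of the key [k y], ties broken by [W];
    every element below [z] then has its key RK-below [rank (k z)]. *)
Lemma card_le_c_plus_of_chain_key (C F : family) (k : NPU -> NPU) :
  chain C -> (forall y, F y -> C (k y)) ->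
  (forall x, card_le_c (fun y => F y /\ RK_le (k y) x)) -> card_le_c_plus F.
Proof.
move=> chainC Ck cones.
have [W woW] := strict_wellorder_exists NPU.
have /choice [rank rankP] : forall x, exists r, C x -> is_rank W C x r.
  move=> x; have [Cx|nCx] := pselect (C x); last by exists x.
  by have [r xr] := rank_exists woW Cx; exists r.
apply: (card_le_c_plus_of_wellorder (strict_wellorder_lex (rank \o k) woW woW)) => z Fz.
apply: (card_le_c_sub (cones (rank (k z)))) => y [Fy Ryz]; split=> //.
have [Cry kyr _] := rankP _ (Ck y Fy).
apply: RK_trans kyr _; case: Ryz => [/= Wr|[/= -> _]]; last exact: RK_refl.
exact: (rank_monotone chainC (rankP _ (Ck z Fz)) Cry Wr).
Qed.

Lemma chain_card_le_c_plus (C : family) : chain C -> card_le_c_plus C.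
Proof.
move=> chainC; apply: (card_le_c_plus_of_chain_key (k := id) chainC) => // x.
by apply: (card_le_c_sub (RK_cone_card_le_c x)) => y [].
Qed.

Definition with_partners (C : family) (h : NPU -> NPU) : family :=
  fun y => exists x, C x /\ (y = x \/ y = h x).

Lemma with_partners_card_le_c_plus (C : family) (h : NPU -> NPU) :
  chain C -> card_le_c_plus (with_partners C h).
Proof.
move=> chainC.
have /choice [base baseP] : forall y, exists x, with_partners C h y -> C x /\ (y = x \/ y = h x).
  by move=> y; have [[x Hx]|ny] := pselect (with_partners C h y); [exists x | exists y].
apply: (card_le_c_plus_of_chain_key (k := base) chainC) => [y /baseP [] //|x].
apply: (card_le_c_sub (card_le_c_union (RK_cone_card_le_c x)
  (card_le_c_image h (RK_cone_card_le_c x)))) => y [/baseP [_ [ey|ey]] bx].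
  by left; rewrite ey.
by right; exists (base y).
Qed.

Lemma with_partners_incomparable (C : family) (h : NPU -> NPU) :
  maximal_chain C -> (forall x, ~ RK_le x (h x) /\ ~ RK_le (h x) x) ->
  incomparable_family (with_partners C h).
Proof.
move=> maxC hP p.
have [[x [Cx px]]|cmp] := pselect (exists x, C x /\ ~ RK_le p x /\ ~ RK_le x p).
  by exists x; split=> //; exists x; split=> //; left.
have Cp : C p.
  apply: (maximal_chain_add maxC) => x Cx; apply: contrapT => ncmp.
  by apply: cmp; exists x; split=> //; split=> ?; apply: ncmp; auto.
by exists (h p); split; [exists p; split=> //; right | case: (hP p)].
Qed.

Theorem mainTheorem19 :
  min_size_is_c_plus maximal_chain /\
  min_size_is_c_plus unbounded /\
  (icp_defined -> min_size_is_c_plus incomparable_family).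
Proof.
have [C maxC] := maximal_chain_exists.
have boundC := chain_card_le_c_plus maxC.1.
have unbC := maximal_chain_unbounded maxC.
split; [|split].
- split; first by exists C.
  by move=> F /maximal_chain_unbounded /unbounded_not_card_le_c.
- by split; [exists C | exact: unbounded_not_card_le_c].
- move=> icp; split.
  2: by move=> F /incomparable_family_unbounded /unbounded_not_card_le_c.
  have /choice [h hP] : forall x, exists y, ~ RK_le x y /\ ~ RK_le y x.
    by move=> x; have [y [_ ?]] := icp x; exists y.
  exists (with_partners C h); split; first exact: with_partners_incomparable.
  exact: with_partners_card_le_c_plus maxC.1.
Qed.
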